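(* For all $f,g\in\mathrm{Mult}[[B]]$, $$f\boxtimes g=g\circ(f\boxtimes_1 g),\qquad g\,\underline{\boxtimes}\,f=f\circ\big((f\boxtimes_2 g)\cdot I\big).$$
   Context: $B$ is a unital algebra over a field $\mathbb K$ of characteristic zero. $\mathrm{Mult}[[B]]$: sequences $f=(f_n)_{n\ge0}$ of multilinear maps $f_n:B^n\to B$. Product $(f\cdot g)_n(x_1,\dots,x_n)=\sum_{k=0}^n f_k(x_1,\dots,x_k)g_{n-k}(x_{k+1},\dots,x_n)$; for $g_0=0$, composition $(f\circ g)_n(x_1,\dots,x_n)=\sum_{l\ge0}\sum_{k_1+\dots+k_l=n,k_i\ge1}f_l(g_{k_1}(x_1,\dots,x_{k_1}),\dots,g_{k_l}(x_{n-k_l+1},\dots,x_n))$; $I=(\delta_{n,1}\mathrm{id}_B)$. Planar binary trees: $Y_0=\{|\}$, $Y_n=\{\sigma\vee\tau:\sigma\in Y_k,\tau\in Y_l,k+l=n-1\}$ ($\sigma\vee\tau$: root with left subtree $\sigma$, right subtree $\tau$); each $\tau\in Y_n$, $n\ge1$, is uniquely $\tau_1\vee(\tau_2\vee(\cdots\vee(\tau_k\vee|)))$; $j_i=|\tau_1|+\dots+|\tau_i|+i$. For $f,g\in\mathrm{Mult}[[B]]$: $(f\cup g)_|=1$, $(f\cup g)_\tau(x_1,\dots,x_n)=g_k((g\cup f)_{\tau_1}(x_1,\dots,x_{j_1-1})x_{j_1},\dots,(g\cup f)_{\tau_k}(x_{j_{k-1}+1},\dots,x_{j_k-1})x_{j_k})$.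 $R:Y\to Y$: $R(|)=|$, $R(\sigma\vee\tau)=(|\vee R(\sigma))\vee R(\tau)$. Boxed convolutions (for $n\ge1$): $(f\boxtimes g)_n(x_1,\dots,x_n)=\sum_{\tau\in Y_n}(f\cup g)_{R(\tau)}(x_1,1,x_2,1,\dots,x_n,1)$, $(f\boxtimes g)_0=g_0$; $(f\underline\boxtimes g)_n(x_1,\dots,x_n)=\sum_{\tau\in Y_n}(f\cup g)_{R(\tau)}(1,x_1,1,x_2,\dots,1,x_n)$, $(f\underline\boxtimes g)_0=g_0$; $(f\boxtimes_1 g)_n(x_1,\dots,x_n)=\sum_{\tau\in Y_{n-1}}(g\cup f)_{|\vee R(\tau)}(x_1,1,x_2,1,\dots,1,x_n)$, $(f\boxtimes_1 g)_0=0$; $(f\boxtimes_2 g)_n(x_1,\dots,x_n)=\sum_{\tau\in Y_n}(f\cup g)_{|\vee R(\tau)}(1,x_1,1,x_2,\dots,1,x_n,1)$, $(f\boxtimes_2 g)_0=g_1(1)$. *)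

From HB Require Import structures.
From mathcomp Require Import all_boot all_order all_algebra.
Set Implicit Arguments. Unset Strict Implicit. Unset Printing Implicit Defensive.
Import Order.TTheory GRing.Theory Num.Theory.
Local Open Scope ring_scope.

(* An element f of Mult[[B]] is represented as a function f : seq B -> B;
   its component f_n is the restriction of f to lists of length n,
   i.e. f_n(x_1,...,x_n) = f [:: x_1; ...; x_n]. *)

Section Mult.
Variables (K : fieldType) (B : algType K).

Definition multilinear (f : seq B -> B) : Prop :=
  forall (s1 s2 : seq B) (a : K) (x y : B),
    f (s1 ++ (a *: x + y) :: s2) = a *: f (s1 ++ x :: s2) + f (s1 ++ y :: s2).

Definition mprod (f g : seq B -> B) : seq B -> B :=
  fun xs => \sum_(k < (size xs).+1) f (take k xs) * g (drop k xs).

Definition mI : seq B -> B := fun xs => if xs is [:: x] then x else 0.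

End Mult.

(* compositions of n: all sequences (k_1,...,k_l) of positive integers with
   sum n, each listed exactly once.  comps 0 = [:: [::]] (l = 0). *)
Fixpoint comps (n : nat) : seq (seq nat) :=
  match n with
  | 0 => [:: [::]]
  | n'.+1 =>
    match n' with
    | 0 => [:: [:: 1]]
    | _ => flatten [seq (match c with
                        | k :: c' => [:: 1 :: k :: c'; k.+1 :: c']
                        | [::] => [::] end) | c <- comps n']
    end
  end.

Section Comp.
Variables (K : fieldType) (B : algType K).
Definition mcomp (f g : seq B -> B) : seq B -> B :=
  fun xs => \sum_(c <- comps (size xs)) f (map g (reshape c xs)).
End Comp.

Inductive tree := Leaf | Node of tree & tree.

Fixpoint tsize (t : tree) : nat :=
  match t with Leaf => 0 | Node l r => (tsize l + tsize r).+1 end.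

Fixpoint trees_ht (h : nat) : seq tree :=
  match h with
  | 0 => [:: Leaf]
  | h'.+1 => Leaf :: [seq Node a b | a <- trees_ht h', b <- trees_ht h']
  end.

Definition Y (n : nat) : seq tree := [seq t <- trees_ht n | tsize t == n].

Fixpoint Rt (t : tree) : tree :=
  match t with Leaf => Leaf | Node s t' => Node (Node Leaf (Rt s)) (Rt t') end.

Section Cup.
Variables (K : fieldType) (B : algType K).

(* (f cup g)_| = 1;
   (f cup g)_tau(x) = g_k((g cup f)_{tau_1}(..) x_{j_1}, ..., (g cup f)_{tau_k}(..) x_{j_k})
   where tau = tau_1 \/ (tau_2 \/ ( ... \/ (tau_k \/ |))).
   The inner [spine] walks down the right comb computing the k arguments. *)
Fixpoint cup (f g : seq B -> B) (t : tree) (xs : seq B) {struct t} : B :=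
  match t with
  | Leaf => 1
  | Node l r =>
      g ((cup g f l (take (tsize l) xs) * nth 0 xs (tsize l))
         :: (fix spine (r : tree) (ys : seq B) {struct r} : seq B :=
               match r with
               | Leaf => [::]
               | Node l' r' =>
                   (cup g f l' (take (tsize l') ys) * nth 0 ys (tsize l'))
                     :: spine r' (drop (tsize l').+1 ys)
               end) r (drop (tsize l).+1 xs))
  end.

Definition ilv1 (xs : seq B) : seq B := flatten [seq [:: x; 1] | x <- xs].
Definition ilv2 (xs : seq B) : seq B := flatten [seq [:: 1; x] | x <- xs].

Definition boxt (f g : seq B -> B) : seq B -> B := fun xs =>
  if xs is [::] then g [::]
  else \sum_(t <- Y (size xs)) cup f g (Rt t) (ilv1 xs).

Definition uboxt (f g : seq B -> B) : seq B -> B := fun xs =>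
  if xs is [::] then g [::]
  else \sum_(t <- Y (size xs)) cup f g (Rt t) (ilv2 xs).

Definition box1 (f g : seq B -> B) : seq B -> B := fun xs =>
  if xs is [::] then 0
  else \sum_(t <- Y (size xs).-1) cup g f (Node Leaf (Rt t)) (behead (ilv2 xs)).

Definition box2 (f g : seq B -> B) : seq B -> B := fun xs =>
  if xs is [::] then g [:: 1]
  else \sum_(t <- Y (size xs)) cup f g (Node Leaf (Rt t)) (rcons (ilv2 xs) 1).

End Cup.

From Pilot Require Import Defs.
From HB Require Import structures.
From mathcomp Require Import all_boot all_order all_algebra zify.
Import Order.TTheory GRing.Theory Num.Theory.
Local Open Scope ring_scope.
Local Notation tsize := Defs.tsize.

(* Every tree of Y_n with n > 0 is uniquely t = t_1 \/ (t_2 \/ ... (t_l \/ |)),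
   and (tsize t_1 + 1, ..., tsize t_l + 1) is a composition of n; summing over
   Y_n is thus summing over a composition (k_1, ..., k_l) of n and independent
   trees t_i in Y_(k_i - 1).  In (f \cup g)_(R t), evaluated at the interleaved
   inputs, the i-th argument of g depends only on t_i and on the i-th block of
   k_i inputs, so multilinearity of g carries the independent sums inside,
   where they become (f \boxtimes_1 g)_(k_i) of the block.  For the second
   identity the last input of each block stays outside the cup as a right
   factor, which is the product with I. *)

Section TreeSums.
Variable V : nmodType.

Definition sum_of_size (T : seq tree) (n : nat) (Phi : tree -> V) : V :=
  \sum_(t <- T | tsize t == n) Phi t.

Lemma big_allpairs_Node (s s' : seq tree) (P : pred tree) (F : tree -> V) :
  \sum_(t <- [seq Node a b | a <- s, b <- s'] | P t) F t =
  \sum_(a <- s) \sum_(b <- s' | P (Node a b)) F (Node a b).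
Proof.
rewrite big_mkcond big_allpairs_dep; apply: eq_bigr => a _.
by rewrite [RHS]big_mkcond.
Qed.

Lemma sum_of_size0 h (Phi : tree -> V) : sum_of_size (trees_ht h) 0 Phi = Phi Leaf.
Proof.
case: h => [|h]; rewrite /sum_of_size /= big_cons /=; first by rewrite big_nil addr0.
by rewrite big_allpairs_Node big1 ?addr0 // => a _; rewrite big_pred0.
Qed.

Lemma big_split_weight (I : Type) (w : I -> nat) (r r' : seq I) m
    (Psi : I -> I -> V) :
  \sum_(a <- r) \sum_(b <- r' | (w a + w b)%N == m) Psi a b =
  \sum_(i < m.+1) \sum_(a <- r | w a == i) \sum_(b <- r' | w b == (m - i)%N) Psi a b.
Proof.
under [RHS]eq_bigr => i _ do rewrite big_mkcond.
rewrite [RHS]exchange_big; apply: eq_bigr => a _.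
have [wa_le|wa_gt] := ltnP (w a) m.+1.
  rewrite (bigD1 (Ordinal wa_le)) //= eqxx [X in _ + X]big1 ?addr0.
    by apply: eq_bigl => b; apply/eqP/eqP; lia.
  move=> i /eqP ne; case: eqP => // wai; case: ne; exact: val_inj.
rewrite big_mkcond big1 => [|b _]; last by case: eqP => //; lia.
by rewrite big1 // => i _; case: eqP => // wai; have := ltn_ord i; lia.
Qed.

Lemma sum_of_sizeS h m (Phi : tree -> V) :
  sum_of_size (trees_ht h.+1) m.+1 Phi =
  \sum_(i < m.+1) sum_of_size (trees_ht h) i
     (fun a => sum_of_size (trees_ht h) (m - i) (fun b => Phi (Node a b))).
Proof. by rewrite /sum_of_size /= big_cons /= big_allpairs_Node big_split_weight. Qed.

Lemma sum_of_size_trees_htS h n (Phi : tree -> V) : (n <= h)%N ->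
  sum_of_size (trees_ht h.+1) n Phi = sum_of_size (trees_ht h) n Phi.
Proof.
elim: h n Phi => [|h IH] [|m] Phi m_le; rewrite ?sum_of_size0 //.
rewrite !sum_of_sizeS; apply: eq_bigr => i _.
have := ltn_ord i => i_le.
rewrite IH; last by lia.
by apply: eq_bigr => a _; apply: IH; lia.
Qed.

Lemma sum_of_size_trees_ht h n (Phi : tree -> V) : (n <= h)%N ->
  sum_of_size (trees_ht h) n Phi = sum_of_size (trees_ht n) n Phi.
Proof.
move=> /subnKC <-; elim: (h - n)%N => [|d IH]; first by rewrite addn0.
by rewrite addnS sum_of_size_trees_htS ?IH // leq_addr.
Qed.

Lemma big_Y n (Phi : tree -> V) : \sum_(t <- Y n) Phi t = sum_of_size (trees_ht n) n Phi.
Proof. by rewrite big_filter. Qed.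

Lemma big_YS n (Psi : tree -> V) :
  \sum_(t <- Y n.+1) Psi t =
  \sum_(i < n.+1) \sum_(a <- Y i) \sum_(b <- Y (n - i)%N) Psi (Node a b).
Proof.
rewrite big_Y sum_of_sizeS; apply: eq_bigr => i _.
have i_le : (i <= n)%N by have := ltn_ord i; lia.
rewrite big_Y sum_of_size_trees_ht //; apply: eq_bigr => a _.
by rewrite big_Y sum_of_size_trees_ht // leq_subr.
Qed.

End TreeSums.

Lemma compsSS n :
  comps n.+2 =
  flatten [seq if c is k :: c' then [:: 1%N :: k :: c'; k.+1 :: c'] else [::]
          | c <- comps n.+1].
Proof. by []. Qed.

Lemma comps_neq_nil n : all (fun c => c != [::]) (comps n.+1).
Proof.
case: n => [|n] //; rewrite compsSS.
by elim: (comps n.+1) => [|[|k c] s IH] //=; rewrite all_cat IH andbT.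
Qed.

Lemma big_compsS (V : nmodType) n (Phi : seq nat -> V) :
  \sum_(c <- comps n.+1) Phi c =
  \sum_(i < n.+1) \sum_(c <- comps (n - i)%N) Phi (i.+1 :: c).
Proof.
elim: n Phi => [|n IH] Phi; first by rewrite big_ord1 /= !big_seq1.
rewrite compsSS big_flatten /= big_map.
transitivity (\sum_(c <- comps n.+1)
   (Phi (1%N :: c) + Phi (if c is k :: c' then k.+1 :: c' else [::]))).
  rewrite big_seq [RHS]big_seq; apply: eq_bigr => c c_in.
  have := allP (comps_neq_nil n) c c_in.
  by case: c {c_in} => [|k c] //= _; rewrite big_cons big_seq1.
rewrite big_split (IH (fun c => Phi (if c is k :: c' then k.+1 :: c' else [::]))).
by rewrite [in RHS]big_ord_recl subn0.
Qed.

Section Multilinear.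
Variables (K : fieldType) (B : algType K) (G : seq B -> B).
Hypothesis G_ml : multilinear G.

Lemma multilinear0 pre post : G (pre ++ 0 :: post) = 0.
Proof.
have := G_ml pre post 1 0 0; rewrite !scale1r addr0 => GG.
by apply: (@addrI _ (G (pre ++ 0 :: post))); rewrite -GG addr0.
Qed.

Lemma multilinear_sum (I : Type) (r : seq I) (F : I -> B) pre post :
  \sum_(a <- r) G (pre ++ F a :: post) = G (pre ++ (\sum_(a <- r) F a) :: post).
Proof.
elim: r => [|a r IH]; first by rewrite !big_nil multilinear0.
by rewrite !big_cons IH -[F a in RHS]scale1r G_ml scale1r.
Qed.

Lemma big_Y_comps (block : tree -> seq B -> B) (spine : tree -> seq B -> seq B)
    (h : seq B -> B) :
  (forall xs, spine Leaf xs = [::]) ->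
  (forall s t xs, ((tsize s).+1 <= size xs)%N ->
     spine (Node s t) xs =
     block s (take (tsize s).+1 xs) :: spine t (drop (tsize s).+1 xs)) ->
  (forall ys, (0 < size ys)%N -> h ys = \sum_(s <- Y (size ys).-1) block s ys) ->
  forall pre xs, \sum_(t <- Y (size xs)) G (pre ++ spine t xs) =
                 \sum_(c <- comps (size xs)) G (pre ++ map h (reshape c xs)).
Proof.
move=> spine_Leaf spine_Node hE pre xs; move sxs: (size xs) => n.
elim/ltn_ind: n pre xs sxs => -[|n] IH pre xs sxs.
  by move/size0nil: sxs => ->; rewrite !big_seq1 spine_Leaf.
rewrite big_YS big_compsS; apply: eq_bigr => i _.
have := ltn_ord i => i_lt.
transitivity (\sum_(a <- Y i) \sum_(c <- comps (n - i)%N)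
   G (rcons pre (block a (take i.+1 xs)) ++ map h (reshape c (drop i.+1 xs)))).
  rewrite !big_Y; apply: eq_bigr => a /eqP ai.
  have ni_lt : (n - i < n.+1)%N by lia.
  have size_drop_xs : size (drop i.+1 xs) = (n - i)%N by rewrite size_drop sxs; lia.
  rewrite -(IH _ ni_lt _ _ size_drop_xs).
  by apply: eq_bigr => b _; rewrite spine_Node ai ?cat_rcons //; lia.
rewrite exchange_big; apply: eq_bigr => c _ /=.
under eq_bigr do rewrite cat_rcons.
by rewrite multilinear_sum hE ?size_takel //; lia.
Qed.

End Multilinear.

Section Cup.
Variables (K : fieldType) (B : algType K).
Implicit Types (f g : seq B -> B) (xs ys : seq B).

(* The argument list of g in (f \cup g)_(Node l r) is spine f g (Node l r);
   this is the inner fixpoint of [cup]. *)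
Definition spine f g : tree -> seq B -> seq B :=
  fix spine r ys {struct r} :=
    if r is Node l r' then
      (cup g f l (take (tsize l) ys) * nth 0 ys (tsize l))
        :: spine r' (drop (tsize l).+1 ys)
    else [::].

Lemma spine_Node_cat f g l r ys z zs : size ys = tsize l ->
  spine f g (Node l r) (ys ++ z :: zs) = cup g f l ys * z :: spine f g r zs.
Proof.
move=> sys; rewrite /= take_size_cat // nth_cat sys ltnn subnn /=.
by rewrite -cat_rcons drop_size_cat // size_rcons sys.
Qed.

Lemma tsize_Rt t : tsize (Rt t) = (tsize t).*2.
Proof. by elim: t => //= a IHa b IHb; rewrite IHa IHb; lia. Qed.

Lemma ilv1_cat xs ys : ilv1 (xs ++ ys) = ilv1 xs ++ ilv1 ys.
Proof. by rewrite /ilv1 map_cat flatten_cat. Qed.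

Lemma ilv2_cat xs ys : ilv2 (xs ++ ys) = ilv2 xs ++ ilv2 ys.
Proof. by rewrite /ilv2 map_cat flatten_cat. Qed.

Lemma ilv1_cons x xs : ilv1 (x :: xs) = x :: 1 :: ilv1 xs.
Proof. by []. Qed.

Lemma ilv2_cons x xs : ilv2 (x :: xs) = 1 :: x :: ilv2 xs.
Proof. by []. Qed.

Lemma rcons_ilv2 xs : rcons (ilv2 xs) 1 = 1 :: ilv1 xs.
Proof. by elim: xs => //= x xs ->. Qed.

Lemma size_ilv2 xs : size (ilv2 xs) = (size xs).*2.
Proof. by elim: xs => //= x xs ->. Qed.

Lemma spine_Rt_ilv1 f g s t xs : ((tsize s).+1 <= size xs)%N ->
  spine f g (Rt (Node s t)) (ilv1 xs) =
  cup g f (Node Leaf (Rt s)) (behead (ilv2 (take (tsize s).+1 xs)))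
    :: spine f g (Rt t) (ilv1 (drop (tsize s).+1 xs)).
Proof.
move=> s_lt; rewrite -[in ilv1 xs](cat_take_drop (tsize s).+1 xs) ilv1_cat.
have := size_takel s_lt; case: (take _ xs) => // x ys sys.
rewrite ilv1_cons ilv2_cons [behead _]/= -rcons_ilv2 -rcons_cons cat_rcons.
by rewrite spine_Node_cat ?mulr1 //= size_ilv2 tsize_Rt; case: sys => ->.
Qed.

(* The i-th argument of f in the second identity:
   (f \boxtimes_2 g)_(k - 1)(x_1, ..., x_(k-1)) * x_k for the block (x_1, ..., x_k). *)
Definition box2_block f g s ys :=
  cup f g (Node Leaf (Rt s)) (rcons (ilv2 (take (tsize s) ys)) 1) *
  nth 0 ys (tsize s).

Lemma spine_Rt_ilv2 f g s t xs : ((tsize s).+1 <= size xs)%N ->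
  spine g f (Rt (Node s t)) (ilv2 xs) =
  box2_block f g s (take (tsize s).+1 xs)
    :: spine g f (Rt t) (ilv2 (drop (tsize s).+1 xs)).
Proof.
move=> s_lt; rewrite /box2_block take_takel // nth_take //.
rewrite -[in ilv2 xs](cat_take_drop (tsize s) xs) (drop_nth 0) //.
rewrite ilv2_cat ilv2_cons -cat_rcons.
rewrite spine_Node_cat // size_rcons size_ilv2 size_takel /= ?tsize_Rt //; lia.
Qed.

Lemma mprod_mIr (h : seq B -> B) ys y : mprod h (@mI K B) (rcons ys y) = h ys * y.
Proof.
rewrite /mprod size_rcons big_ord_recr /= drop_oversize ?size_rcons // mulr0 addr0.
rewrite big_ord_recr /= big1 ?add0r => [|i _].
  by rewrite -cats1 take_size_cat // drop_size_cat.
rewrite drop_rcons ?(ltnW (ltn_ord i)) //.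
have : (0 < size (drop i ys))%N by rewrite size_drop subn_gt0.
by case: (drop i ys) => // z [|? ?] _; rewrite mulr0.
Qed.

Lemma box2E f g zs :
  box2 f g zs = \sum_(s <- Y (size zs)) cup f g (Node Leaf (Rt s)) (rcons (ilv2 zs) 1).
Proof. by case: zs => [|x zs] //=; rewrite big_seq1 /= mulr1. Qed.

Lemma mprod_box2_mI f g ys : (0 < size ys)%N ->
  mprod (box2 f g) (@mI K B) ys = \sum_(s <- Y (size ys).-1) box2_block f g s ys.
Proof.
case/lastP: ys => // zs y _; rewrite mprod_mIr box2E size_rcons mulr_suml !big_Y.
apply: eq_bigr => s /eqP s_zs; rewrite /box2_block s_zs.
by rewrite -[rcons zs y]cats1 take_size_cat // nth_cat ltnn subnn.
Qed.

Lemma boxt_comp f g : multilinear g ->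
  forall xs, boxt f g xs = mcomp g (box1 f g) xs.
Proof.
move=> g_ml [|x xs]; first by rewrite /boxt /mcomp /= big_seq1.
rewrite /boxt /mcomp -(@big_Y_comps _ _ g g_ml
  (fun s ys => cup g f (Node Leaf (Rt s)) (behead (ilv2 ys)))
  (fun t ys => spine f g (Rt t) (ilv1 ys)) (box1 f g) _ _ _ [::]) //.
- by rewrite !big_Y; apply: eq_bigr => -[|s t].
- by move=> s t ys /spine_Rt_ilv1 ->.
- by case.
Qed.

Lemma uboxt_comp f g : multilinear f ->
  forall xs, uboxt g f xs = mcomp f (mprod (box2 f g) (@mI K B)) xs.
Proof.
move=> f_ml [|x xs]; first by rewrite /uboxt /mcomp /= big_seq1.
rewrite /uboxt /mcomp -(@big_Y_comps _ _ f f_ml (box2_block f g)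
  (fun t ys => spine g f (Rt t) (ilv2 ys)) _ _ _ _ [::]) //.
- by rewrite !big_Y; apply: eq_bigr => -[|s t].
- by move=> s t ys /spine_Rt_ilv2 ->.
- exact: mprod_box2_mI.
Qed.
End Cup.

Theorem lemma3 (K : fieldType) (charK0 : [pchar K] =i pred0)
  (B : algType K) (f g : seq B -> B)
  (hf : multilinear f) (hg : multilinear g) :
  (forall xs : seq B, boxt f g xs = mcomp g (box1 f g) xs) /\
  (forall xs : seq B, uboxt g f xs = mcomp f (mprod (box2 f g) (@mI K B)) xs).
Proof. by split; [exact: boxt_comp | exact: uboxt_comp]. Qed.
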